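(* For each type $X$ in the list below, the determinant of the quantum affine Cartan matrix of type $X$ is $$\det C_{\mathrm{aff}}(t)=\frac{(1-t^{2p})(1-t^{2q})(1-t^{2r})}{1-t^2},$$ where $(p,q,r)$ is given by: $\mathsf A_l$ ($l\ge0$): $(\tfrac12(l+1),\tfrac12(l+1),1)$; $\mathsf D_l$ ($l\ge4$): $(l-2,2,2)$; $\mathsf E_6$: $(3,3,2)$; $\mathsf E_7$: $(4,3,2)$; $\mathsf E_8$: $(5,3,2)$; $\mathsf C_l$ ($l\ge2$): $(l,1,1)$; $\mathsf B_l$ ($l\ge3$): $(l-1,2,1)$; $\mathsf F_4$: $(3,2,1)$; $\mathsf G_2$: $(2,1,1)$.
   Context: For a type $X$ of rank $l$, let $C_{\mathrm{aff}}$ be the $(l+1)\times(l+1)$ affine (untwisted, i.e. of type $X^{(1)}$) generalized Cartan matrix; for $\mathsf A_l$ with $l\ge2$ this is the Cartan matrix of a cycle with $l+1$ vertices, and for $\mathsf A_1$ it is $\begin{pmatrix}2&-2\\-2&2\end{pmatrix}$. The quantum affine Cartan matrix $C_{\mathrm{aff}}(t)$ is obtained from $C_{\mathrm{aff}}$ by replacing each diagonal entry $2$ by $1+t^2$ and multiplying each off-diagonal entry by $t$, i.e. $C_{\mathrm{aff}}(t)=(1-t)^2\mathbf 1+tC_{\mathrm{aff}}$; for type $\mathsf A_0$ one sets $C_{\mathrm{aff}}(t)=((1-t)^2)$. *)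

From mathcomp Require Import all_boot all_order all_algebra.
Set Implicit Arguments.
Unset Strict Implicit.
Unset Printing Implicit Defensive.
Import GRing.Theory.
Local Open Scope ring_scope.

(** Finite types X (the affine type is the untwisted X^(1)). *)
Inductive ctype : Type :=
| TA of nat | TD of nat | TE6 | TE7 | TE8 | TC of nat | TB of nat | TF4 | TG2.

Definition admissible (X : ctype) : bool :=
  match X with
  | TA _ => true
  | TD l => (4 <= l)%N
  | TC l => (2 <= l)%N
  | TB l => (3 <= l)%N
  | _ => true
  end.

Definition rank (X : ctype) : nat :=
  match X with
  | TA l | TD l | TC l | TB l => l
  | TE6 => 6 | TE7 => 7 | TE8 => 8 | TF4 => 4 | TG2 => 2
  end.

(** Edges of the affine Dynkin diagram (vertices 0..rank X, 0 = affine node,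
    Bourbaki numbering of the finite part).  An edge (i, j, a, b) contributes
    a_{ij} = a and a_{ji} = b, with a_{ij} = <alpha_i^vee, alpha_j>. *)
Definition simple_edge (i j : nat) : nat * nat * int * int := (i, j, -1, -1).

Definition aff_edges (X : ctype) : seq (nat * nat * int * int) :=
  match X with
  | TA l => (* cycle on l+1 vertices; for l = 1 the two edges 0-1, 1-0 give
               the entries -2; for l = 0 the loop 0-0 gives the entry 0 *)
      [seq simple_edge i (i.+1 %% l.+1) | i <- iota 0 l.+1]
  | TD l => simple_edge 0 2 :: [seq simple_edge i i.+1 | i <- iota 1 (l - 2)]
              ++ [:: simple_edge (l - 2) l]
  | TE6 => [seq simple_edge e.1 e.2 | e <- [:: (0,2); (2,4); (1,3); (3,4); (4,5); (5,6)]%N]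
  | TE7 => [seq simple_edge e.1 e.2 |
             e <- [:: (0,1); (1,3); (3,4); (4,5); (5,6); (6,7); (2,4)]%N]
  | TE8 => [seq simple_edge e.1 e.2 |
             e <- [:: (1,3); (3,4); (4,5); (5,6); (6,7); (7,8); (2,4); (8,0)]%N]
  | TC l => (* 0 and l long, 1..l-1 short *)
      (0%N, 1%N, -1, -2) :: [seq simple_edge i i.+1 | i <- iota 1 (l - 2)]
        ++ [:: ((l - 1)%N, l, -2, -1)]
  | TB l => (* l short, others long *)
      simple_edge 0 2 :: [seq simple_edge i i.+1 | i <- iota 1 (l - 2)]
        ++ [:: ((l - 1)%N, l, -1, -2)]
  | TF4 => [:: simple_edge 0 1; simple_edge 1 2; (2%N, 3%N, -1, -2); simple_edge 3 4]
  | TG2 => (* alpha_1 short, alpha_2 and alpha_0 long *)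
      [:: simple_edge 0 2; (1%N, 2%N, -3, -1)]
  end.

Definition aff_entry (X : ctype) (i j : nat) : int :=
  (if i == j then 2 else 0) +
  \sum_(e <- aff_edges X)
     ((if (e.1.1.1 == i) && (e.1.1.2 == j) then e.1.2 else 0) +
      (if (e.1.1.2 == i) && (e.1.1.1 == j) then e.2 else 0)).

Definition Caff (X : ctype) : 'M[int]_((rank X).+1) :=
  \matrix_(i, j) aff_entry X i j.

Definition qCaff (X : ctype) : 'M[{poly int}]_((rank X).+1) :=
  ((1 - 'X) ^+ 2)%:M + 'X *: map_mx (fun z : int => z%:~R%:P) (Caff X).

(** Doubled exponents (2p, 2q, 2r). *)
Definition pqr2 (X : ctype) : nat * nat * nat :=
  match X with
  | TA l => (l.+1, l.+1, 2)
  | TD l => (2 * (l - 2), 4, 4)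
  | TE6 => (6, 6, 4)
  | TE7 => (8, 6, 4)
  | TE8 => (10, 6, 4)
  | TC l => (2 * l, 2, 2)
  | TB l => (2 * (l - 1), 4, 2)
  | TF4 => (6, 4, 2)
  | TG2 => (4, 2, 2)
  end%N.

From mathcomp Require Import all_boot all_order all_algebra perm.
From mathcomp Require Import ring zify.
Import GRing.Theory.
Local Open Scope ring_scope.

(* The entries of C_aff(t) vanish off the Dynkin diagram and its diagonal entries are
   (1 - t)^2 + 2t = 1 + t^2, so expanding the determinant along a leaf v with neighbour w gives
     det(G) = (1 + t^2) det(G - v) - t^2 a_vw a_wv det(G - v - w).
   Along a simply laced chain this is the recurrence of the q-integers
   [n]_{t^2} = (1 - t^{2n}) / (1 - t^2), so for the types B, C and D the determinant is
   determined by what happens at the two ends of the chain; the exceptional types are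
   evaluated by the same expansion, by reflection.  For A_l the diagram is a cycle and
   C_aff(t) = (1 - tP)(1 - tP^-1) for the cyclic permutation matrix P, whose
   determinant det(1 - tP) = 1 - t^(l+1) is read off after an upper unitriangular change
   of basis. *)

Lemma lift_lift0 n (k : 'I_n.+1) (j : 'I_n) :
  lift (lift ord0 k) (lift ord0 j) = lift ord0 (lift k j).
Proof. by apply: val_inj; rewrite /= /bump !leq0n !add1n ltnS addnS. Qed.

Lemma lift_lift0_ord0 n (k : 'I_n.+1) : lift (lift ord0 k) ord0 = ord0 :> 'I_n.+2.
Proof. exact: val_inj. Qed.

Lemma det_leaf (R : comPzRingType) n (M : 'M[R]_n.+2) (k : 'I_n.+1) :
  (forall j, j != ord0 -> j != lift ord0 k -> M ord0 j = 0 /\ M j ord0 = 0) ->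
  \det M = M ord0 ord0 * \det (row' ord0 (col' ord0 M))
    - M ord0 (lift ord0 k) * M (lift ord0 k) ord0
      * \det (row' k (col' k (row' ord0 (col' ord0 M)))).
Proof.
move=> leaf; rewrite (expand_det_row _ ord0) (bigD1 ord0) //= (bigD1 (lift ord0 k)) //=.
rewrite big1 ?addr0 => [|j /andP[j0 jk]]; last by rewrite (proj1 (leaf j j0 jk)) mul0r.
rewrite /cofactor expr0 mul1r (expand_det_col (row' _ (col' (lift ord0 k) M)) ord0).
rewrite (bigD1 k) //= big1 ?addr0; last first.
  move=> i ik; rewrite !mxE lift_lift0_ord0.
  by rewrite (proj2 (leaf _ _ _)) ?mul0r ?lift_eqF // (inj_eq lift_inj).
rewrite /cofactor !mxE lift_lift0_ord0.
have -> : row' k (col' ord0 (row' ord0 (col' (lift ord0 k) M))) =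
          row' k (col' k (row' ord0 (col' ord0 M))).
  by apply/matrixP => i j; rewrite !mxE lift_lift0.
rewrite /= /bump !leq0n add0n addn0 exprS -signr_odd.
by case: (odd k); rewrite ?expr0 ?expr1; ring.
Qed.

Definition qentry (c : nat -> nat -> int) (i j : nat) : {poly int} :=
  (if i == j then (1 - 'X) ^+ 2 else 0) + 'X * (c i j)%:~R.

Definition qmx n c : 'M[{poly int}]_n := \matrix_(i, j) qentry c i j.

Definition qdet n c := \det (qmx n c).

Definition dropv k (c : nat -> nat -> int) i j := c (bump k i) (bump k j).

Lemma qdet_ext n c c' :
  (forall i j, (i < n)%N -> (j < n)%N -> c i j = c' i j) -> qdet n c = qdet n c'.
Proof.
move=> cc'; congr (\det _); apply/matrixP => i j.
by rewrite !mxE /qentry cc'.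
Qed.

Lemma qdet0 c : qdet 0 c = 1.
Proof. exact: det_mx00. Qed.

Lemma qdet1 c : qdet 1 c = qentry c 0 0.
Proof. by rewrite /qdet det_mx11 mxE. Qed.

Lemma qmx_dropv n c (k : 'I_n.+1) :
  row' k (col' k (qmx n.+1 c)) = qmx n (dropv k c).
Proof.
apply/matrixP => i j; rewrite !mxE /qentry /dropv /=.
by rewrite (inj_eq (can_inj (bumpK k))).
Qed.

Lemma qdet_leaf n c k : (0 < k < n.+2)%N ->
  (forall j, (j < n.+2)%N -> j != 0%N -> j != k -> c 0%N j = 0 /\ c j 0%N = 0) ->
  qdet n.+2 c = qentry c 0 0 * qdet n.+1 (dropv 0 c)
              - 'X ^+ 2 * (c 0%N k * c k 0%N)%:~R * qdet n (dropv k.-1 (dropv 0 c)).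
Proof.
move=> /andP[k_gt0 k_lt] leaf; have k'_lt : (k.-1 < n.+1)%N by rewrite prednK.
have lift_k' : lift ord0 (Ordinal k'_lt) = Ordinal k_lt.
  by apply: val_inj; rewrite /= /bump leq0n add1n prednK.
rewrite /qdet (@det_leaf _ _ _ (Ordinal k'_lt)) ?lift_k'; last first.
  move=> j; rewrite -!val_eqE /= => j0 jk.
  rewrite !mxE /qentry eq_sym (negbTE j0).
  by have [-> ->] := leaf j (ltn_ord j) j0 jk; rewrite mulr0 addr0.
rewrite (qmx_dropv _ _ ord0) qmx_dropv !mxE /qentry /= eq_sym eqn0Ngt k_gt0 /=.
by rewrite intrM; ring.
Qed.

Definition swap01 (i : nat) : nat :=
  if i == 0%N then 1%N else if i == 1%N then 0%N else i.

Definition swapv (c : nat -> nat -> int) i j := c (swap01 i) (swap01 j).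

Lemma qdet_swapv n c : qdet n.+2 (swapv c) = qdet n.+2 c.
Proof.
set s := tperm (ord0 : 'I_n.+2) (Ordinal (isT : 1 < n.+2)%N).
have sE (i : 'I_n.+2) : val (s i) = swap01 i.
  rewrite /swap01; case: tpermP => [->|->|/eqP i0 /eqP i1] //=.
  by rewrite -!val_eqE /= in i0 i1; rewrite (negbTE i0) (negbTE i1).
rewrite /qdet; suff -> : qmx n.+2 (swapv c) = row_perm s (col_perm s (qmx n.+2 c)).
  rewrite row_permE col_permE !det_mulmx !det_perm odd_permV.
  by rewrite mulrCA -expr2 sqrr_sign mulr1.
apply/matrixP => i j; rewrite !mxE /qentry /swapv -!sE.
suff -> : (val (s i) == val (s j)) = (val i == val j) by [].
by rewrite (inj_eq val_inj) (inj_eq perm_inj) -(inj_eq val_inj).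
Qed.

Inductive qexpr :=
  | QInt of int | QX | QAdd of qexpr & qexpr | QSub of qexpr & qexpr | QMul of qexpr & qexpr.

Fixpoint qeval (e : qexpr) : {poly int} :=
  match e with
  | QInt z => z%:~R
  | QX => 'X
  | QAdd e1 e2 => qeval e1 + qeval e2
  | QSub e1 e2 => qeval e1 - qeval e2
  | QMul e1 e2 => qeval e1 * qeval e2
  end.

Definition qdiag (z : int) : qexpr :=
  QAdd (QMul (QSub (QInt 1) QX) (QSub (QInt 1) QX)) (QMul QX (QInt z)).

Lemma qeval_qdiag c : qeval (qdiag (c 0%N 0%N)) = qentry c 0 0.
Proof. by rewrite /qentry /= expr2. Qed.

Definition nbr0 n (c : nat -> nat -> int) : nat :=
  head 1%N [seq j <- iota 1 n.+1 | (c 0%N j != 0) || (c j 0%N != 0)].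

Definition is_leaf0 n (c : nat -> nat -> int) k : bool :=
  (0 < k < n.+2)%N &&
  all (fun j => (j == 0%N) || (j == k) || (c 0%N j == 0) && (c j 0%N == 0)) (iota 0 n.+2).

Definition leaf_expr (rec1 rec0 : (nat -> nat -> int) -> option qexpr) n c :=
  let k := nbr0 n c in
  if is_leaf0 n c k then
    if rec1 (dropv 0 c) is Some e1 then
      if rec0 (dropv k.-1 (dropv 0 c)) is Some e0 then
        Some (QSub (QMul (qdiag (c 0%N 0%N)) e1)
                   (QMul (QMul (QMul QX QX) (QInt (c 0%N k * c k 0%N))) e0))
      else None
    else None
  else None.

(* Expands along vertex 0, or along vertex 1 after swapping it with 0, whenever that vertex
   is a leaf (an isolated vertex 0 is expanded with the dummy neighbour 1); this suffices for
   the trees met below. *)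
Fixpoint qdet_expr n c {struct n} : option qexpr :=
  match n with
  | 0 => Some (QInt 1)
  | m.+1 =>
    if m is n'.+1 then
      if leaf_expr (qdet_expr m) (qdet_expr n') n' c is Some e then Some e
      else leaf_expr (qdet_expr m) (qdet_expr n') n' (swapv c)
    else Some (qdiag (c 0%N 0%N))
  end.

Lemma leaf_expr_sound rec1 rec0 n c e :
  (forall c' e', rec1 c' = Some e' -> qdet n.+1 c' = qeval e') ->
  (forall c' e', rec0 c' = Some e' -> qdet n c' = qeval e') ->
  leaf_expr rec1 rec0 n c = Some e -> qdet n.+2 c = qeval e.
Proof.
move=> sound1 sound0; rewrite /leaf_expr; case: ifP => // /andP[k_range /allP leaf].
case E1: rec1 => [e1|] //; case E0: rec0 => [e0|] // [<-].
rewrite (@qdet_leaf _ _ _ k_range) => [|j j_lt j0 jk]; last first.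
  have := leaf j; rewrite mem_iota j_lt (negbTE j0) (negbTE jk) /=.
  by move=> /(_ isT) /andP[/eqP -> /eqP ->].
by rewrite (sound1 _ _ E1) (sound0 _ _ E0) /qentry /= !expr2.
Qed.

Lemma qdet_expr_sound n c e : qdet_expr n c = Some e -> qdet n c = qeval e.
Proof.
elim/ltn_ind: n c e => -[|[|n]] IH c e /=; first by move=> [<-]; rewrite qdet0.
  by move=> [<-]; rewrite qdet1 qeval_qdiag.
have sound := leaf_expr_sound _ _ _ _ _ (IH _ (ltnSn _)) (IH _ (ltnW (ltnSn _))).
case E: leaf_expr => [e'|]; first by move=> [<-]; apply: sound E.
by rewrite -qdet_swapv; apply: sound.
Qed.

Ltac qdet_reflect :=
  match goal with |- context [qdet ?n ?c] =>
    let r := eval vm_compute in (qdet_expr n c) in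
    match r with Some ?e =>
      rewrite (@qdet_expr_sound n c e); [rewrite /= | by vm_compute]
    end
  end.

(* [aff_entry] with its sum written as a [foldr], which [vm_compute] can evaluate. *)
Definition edge_weight (es : seq (nat * nat * int * int)) (i j : nat) : int :=
  foldr (fun e w => (if (e.1.1.1 == i) && (e.1.1.2 == j) then e.1.2 else 0) +
                    (if (e.1.1.2 == i) && (e.1.1.1 == j) then e.2 else 0) + w) 0 es.

Definition cartan_of es i j : int := (if i == j then 2 else 0) + edge_weight es i j.

Lemma aff_entryE X i j : aff_entry X i j = cartan_of (aff_edges X) i j.
Proof.
rewrite /aff_entry /cartan_of; congr (_ + _).
by elim: (aff_edges X) => [|e es IH]; rewrite ?big_nil // big_cons IH.
Qed.

Lemma qCaffE X : \det (qCaff X) = qdet (rank X).+1 (cartan_of (aff_edges X)).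
Proof.
congr (\det _); apply/matrixP => i j; rewrite !mxE /qentry -aff_entryE rmorph_int.
by case: (i =P j) => [->|/eqP ij]; rewrite ?eqxx // val_eqE (negbTE ij).
Qed.

Lemma edge_weight_cons e es i j :
  edge_weight (e :: es) i j =
  (if (e.1.1.1 == i) && (e.1.1.2 == j) then e.1.2 else 0) +
  (if (e.1.1.2 == i) && (e.1.1.1 == j) then e.2 else 0) + edge_weight es i j.
Proof. by []. Qed.

Lemma edge_weight_cat es1 es2 i j :
  edge_weight (es1 ++ es2) i j = edge_weight es1 i j + edge_weight es2 i j.
Proof. by elim: es1 => [|e es IH] /=; rewrite ?add0r // IH addrA. Qed.

Lemma edge_weight_path (f : nat -> nat) a m i j :
  edge_weight [seq simple_edge k (f k) | k <- iota a m] i j =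
  (if (a <= i < a + m)%N && (j == f i) then -1 else 0) +
  (if (a <= j < a + m)%N && (i == f j) then -1 else 0).
Proof.
elim: m a => [|m IH] a /=; first by rewrite addn0; do 2 case: ifP => ?; lia.
rewrite -/(edge_weight _ i j) IH /simple_edge /=.
by case: (eqVneq a i) => [<-|?]; case: (eqVneq a j) => [<-|?] /=; repeat (case: ifP => ? /=); lia.
Qed.

Ltac entry_solve :=
  intros; try split; try unfold aff_edges; rewrite /cartan_of
    ?(edge_weight_cons, edge_weight_cat, edge_weight_path) /simple_edge /=;
  repeat (case: ifP => ? /=; try (exfalso; lia)); lia.

Section ThreeTermRecurrence.
Variables (R : comPzRingType) (x : R) (G : nat -> R).

Lemma three_term_geom s m :
  (forall j, (s <= j < s + m)%N -> G j = (1 + x) * G j.+1 - x * G j.+2) ->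
  G s = (\sum_(i < m.+1) x ^+ i) * G (s + m)%N - x * (\sum_(i < m) x ^+ i) * G (s + m).+1.
Proof.
elim: m => [|m IH] rec; first by rewrite addn0 big_ord1 big_ord0; ring.
rewrite IH => [|j jm]; last by apply: rec; lia.
rewrite (rec (s + m)%N) -?addnS; last lia.
by rewrite !big_ord_recr /= exprS; ring.
Qed.

Lemma three_term_chain s m :
  (forall j, (s <= j < s + m)%N -> G j = (1 + x) * G j.+1 - x * G j.+2) ->
  G s * (1 - x) = (1 - x ^+ m.+1) * G (s + m)%N - x * (1 - x ^+ m) * G (s + m).+1.
Proof.
have geom n : 1 - x ^+ n = (\sum_(i < n) x ^+ i) * (1 - x).
  by rewrite -opprB subrX1 -mulNr opprB mulrC.
by move=> /three_term_geom ->; rewrite !geom; ring.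
Qed.

End ThreeTermRecurrence.

(* The determinant of the principal submatrix on the vertices j, ..., N - 1. *)
Definition qtail c N j := qdet (N - j) (iter j (dropv 0) c).

Lemma iter_dropv0 c j a b : iter j (dropv 0) c a b = c (a + j)%N (b + j)%N.
Proof.
by elim: j a b => [|j IH] a b; rewrite ?addn0 //= /dropv IH /bump /= ?add1n !addSnnS.
Qed.

Lemma qtail0 c N : qtail c N 0 = qdet N c.
Proof. by rewrite /qtail subn0. Qed.

Lemma qtail_end c N : qtail c N N = 1.
Proof. by rewrite /qtail subnn qdet0. Qed.

Lemma qtail_last c l : c l l = 2 -> qtail c l.+1 l = 1 + 'X^2.
Proof. by move=> cll; rewrite /qtail subSnn qdet1 /qentry iter_dropv0 /= cll; ring. Qed.

Lemma qtail_step c N j : (j.+2 <= N)%N -> c j j = 2 ->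
  (forall x, (j.+2 <= x < N)%N -> c j x = 0 /\ c x j = 0) ->
  qtail c N j = (1 + 'X^2) * qtail c N j.+1
              - 'X^2 * (c j j.+1 * c j.+1 j)%:~R * qtail c N j.+2.
Proof.
move=> jN cjj far; rewrite /qtail.
have -> : (N - j = (N - j.+2).+2)%N by lia.
have -> : (N - j.+1 = (N - j.+2).+1)%N by lia.
rewrite (@qdet_leaf _ _ 1) // => [|x xN x0 x1]; last by rewrite !iter_dropv0; apply: far; lia.
by rewrite /qentry !iter_dropv0 /= cjj; ring.
Qed.

Lemma qtail_last2 c l : c l l = 2 -> c l.+1 l.+1 = 2 ->
  qtail c l.+2 l = (1 + 'X^2) ^+ 2 - 'X^2 * (c l l.+1 * c l.+1 l)%:~R.
Proof.
move=> cll cl1; rewrite qtail_step // => [|x]; last lia.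
by rewrite qtail_last // qtail_end; ring.
Qed.

Definition simple_link (c : nat -> nat -> int) N j : Prop :=
  [/\ (j.+2 <= N)%N, c j j = 2, c j j.+1 * c j.+1 j = 1
    & forall x, (j.+2 <= x < N)%N -> c j x = 0 /\ c x j = 0].

Lemma qtail_link c N j : simple_link c N j ->
  qtail c N j = (1 + 'X^2) * qtail c N j.+1 - 'X^2 * qtail c N j.+2.
Proof. by case=> jN cjj w far; rewrite qtail_step // w mulr1. Qed.

Lemma qtail_chain c N s m : (forall j, (s <= j < s + m)%N -> simple_link c N j) ->
  qtail c N s * (1 - 'X^2) =
  (1 - 'X^2 ^+ m.+1) * qtail c N (s + m) - 'X^2 * (1 - 'X^2 ^+ m) * qtail c N (s + m).+1.
Proof. by move=> links; apply: three_term_chain => j /links /qtail_link. Qed.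

Lemma qdet_fork c l : (3 <= l)%N ->
  c 0%N 0%N = 2 -> c 1%N 1%N = 2 -> c 0%N 2%N * c 2%N 0%N = 1 ->
  (forall j, (j <= l)%N -> j != 0%N -> j != 2%N -> c 0%N j = 0 /\ c j 0%N = 0) ->
  (forall x, (3 <= x <= l)%N -> c 1%N x = 0 /\ c x 1%N = 0) ->
  qdet l.+1 c = (1 + 'X^2) * qtail c l.+1 1 - 'X^2 * (1 + 'X^2) * qtail c l.+1 3.
Proof.
(* Expand along the leaf 0, then along vertex 1, which is isolated once 0 and 2 are gone. *)
case: l => [|[|[|l]]] // _ c00 c11 w02 leaf0 far1.
rewrite (@qdet_leaf _ _ 2) //= [qdet _ (dropv 1 _)](@qdet_leaf _ _ 1) //; last first.
  by move=> j jl j0 j1; rewrite /dropv /bump /= lt0n j0; apply: far1; lia.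
have -> : qdet l.+1 (dropv 0 (dropv 1 (dropv 0 c))) = qtail c l.+4 3.
  by apply: qdet_ext => a b _ _; rewrite iter_dropv0 /dropv /bump /= !add1n !addn3.
have [c13 _] : c 1%N 3%N = 0 /\ c 3%N 1%N = 0 by apply: far1.
by rewrite /qtail /qentry /dropv /= c00 c11 c13 w02; ring.
Qed.

Lemma qdet_TC l : (2 <= l)%N ->
  qdet l.+1 (cartan_of (aff_edges (TC l))) * (1 - 'X^2) =
  (1 - 'X^(2 * l)) * (1 - 'X^2) * (1 - 'X^2).
Proof.
case: l => [|[|[|m]]] // _; first by qdet_reflect; ring.
rewrite -qtail0; set c := cartan_of _; set G := qtail c m.+4.
have link j : (1 <= j)%N -> (j.+2 <= m.+3)%N -> simple_link c m.+4 j.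
  by move=> *; split; [lia | rewrite /c; entry_solve ..].
have chain1 : G 1%N * (1 - 'X^2) =
    (1 - 'X^2 ^+ m.+2) * G m.+2 - 'X^2 * (1 - 'X^2 ^+ m.+1) * G m.+3.
  by apply: qtail_chain => j jm; apply: link; lia.
have chain2 : G 2%N * (1 - 'X^2) =
    (1 - 'X^2 ^+ m.+1) * G m.+2 - 'X^2 * (1 - 'X^2 ^+ m) * G m.+3.
  by apply: qtail_chain => j jm; apply: link; lia.
rewrite /G qtail_step // -/G; [|rewrite /c; entry_solve ..].
rewrite mulrBl -!mulrA chain1 chain2 /G qtail_last2 ?qtail_last; [|rewrite /c; entry_solve ..].
have [-> ->] : c 0%N 1%N * c 1%N 0%N = 2 /\ c m.+2 m.+3 * c m.+3 m.+2 = 2.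
  by rewrite /c; entry_solve.
by rewrite exprM !exprS; ring.
Qed.

Lemma qdet_TB l : (3 <= l)%N ->
  qdet l.+1 (cartan_of (aff_edges (TB l))) * (1 - 'X^2) =
  (1 - 'X^(2 * (l - 1))) * (1 - 'X^4) * (1 - 'X^2).
Proof.
case: l => [|[|[|[|m]]]] // _; first by qdet_reflect; ring.
set c := cartan_of _; set G := qtail c m.+4.+1.
have link j : (1 <= j)%N -> (j.+2 <= m.+4)%N -> simple_link c m.+4.+1 j.
  by move=> *; split; [lia | rewrite /c; entry_solve ..].
have chain1 : G 1%N * (1 - 'X^2) =
    (1 - 'X^2 ^+ m.+3) * G m.+3 - 'X^2 * (1 - 'X^2 ^+ m.+2) * G m.+4.
  by apply: qtail_chain => j jm; apply: link; lia.
have chain3 : G 3%N * (1 - 'X^2) =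
    (1 - 'X^2 ^+ m.+1) * G m.+3 - 'X^2 * (1 - 'X^2 ^+ m) * G m.+4.
  by apply: qtail_chain => j jm; apply: link; lia.
rewrite qdet_fork // -/G; [|rewrite /c; entry_solve ..].
rewrite mulrBl -!mulrA chain1 chain3 /G qtail_last2 ?qtail_last; [|rewrite /c; entry_solve ..].
have -> : c m.+3 m.+4 * c m.+4 m.+3 = 2 by rewrite /c; entry_solve.
by rewrite subn1 /= exprM !exprS; ring.
Qed.

Lemma qdet_TD l : (4 <= l)%N ->
  qdet l.+1 (cartan_of (aff_edges (TD l))) * (1 - 'X^2) =
  (1 - 'X^(2 * (l - 2))) * (1 - 'X^4) * (1 - 'X^4).
Proof.
case: l => [|[|[|[|[|m]]]]] // _; first by qdet_reflect; ring.
set c := cartan_of _; set G := qtail c m.+4.+2.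
have link j : (1 <= j)%N -> (j.+3 <= m.+4.+1)%N -> simple_link c m.+4.+2 j.
  by move=> *; split; [lia | rewrite /c; entry_solve ..].
have chain1 : G 1%N * (1 - 'X^2) =
    (1 - 'X^2 ^+ m.+3) * G m.+3 - 'X^2 * (1 - 'X^2 ^+ m.+2) * G m.+4.
  by apply: qtail_chain => j jm; apply: link; lia.
have chain3 : G 3%N * (1 - 'X^2) =
    (1 - 'X^2 ^+ m.+1) * G m.+3 - 'X^2 * (1 - 'X^2 ^+ m) * G m.+4.
  by apply: qtail_chain => j jm; apply: link; lia.
have star : G m.+3 = qdet 3 (cartan_of [:: simple_edge 0 1; simple_edge 0 2]).
  rewrite /G /qtail (_ : (m.+4.+2 - m.+3 = 3)%N); last lia.
  by apply: qdet_ext => -[|[|[|i]]] -[|[|[|j]]] // _ _; rewrite iter_dropv0 /c; entry_solve.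
rewrite qdet_fork // -/G; [|rewrite /c; entry_solve ..].
rewrite mulrBl -!mulrA chain1 chain3 star /G qtail_last2; [|rewrite /c; entry_solve ..].
have -> : c m.+4 m.+4.+1 = 0 by rewrite /c; entry_solve.
by qdet_reflect; rewrite (_ : (m.+4.+1 - 2 = m.+3)%N) // exprM !exprS; ring.
Qed.

Section CyclicType.
Variable N : nat.
Local Notation n := N.+1.

Definition cycle_succ : 'S_n := perm (@ordS_inj n).

Lemma cycle_succE (i : 'I_n) : val (cycle_succ i) = (i.+1 %% n)%N.
Proof. by rewrite permE. Qed.

Lemma det_1_sub_cycle (R : comPzRingType) (x : R) :
  \det (1%:M - x *: perm_mx cycle_succ) = 1 - x ^+ n.
Proof.
pose U : 'M[R]_n := \matrix_(i, j) (if (i <= j)%N then x ^+ (j - i) else 0).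
have detU : \det U = 1.
  rewrite -det_tr det_trig; last by apply/is_trig_mxP => i j ij; rewrite !mxE leqNgt ij.
  by rewrite big1 // => i _; rewrite !mxE leqnn subnn expr0.
(* (1 - xP) U is upper triangular with diagonal 1, ..., 1, 1 - x^n. *)
have := det_mulmx (1%:M - x *: perm_mx cycle_succ) U; rewrite detU mulr1 => <-.
rewrite mulmxBl mul1mx -scalemxAl -row_permE.
rewrite det_trig; last first.
  apply/is_trig_mxP => i j ij; rewrite !mxE cycle_succE modn_small; last first.
    by move: (ltn_ord j) ij; lia.
  rewrite (ltnW ij) ij; case E: (j - i)%N => [|k]; first by move: E ij; lia.
  by rewrite (_ : (j - i.+1 = k)%N) ?exprS ?subrr //; lia.
rewrite big_ord_recr /= big1 ?mul1r => [|i _]; last first.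
  rewrite !mxE cycle_succE /= modn_small; last by rewrite ltnS ltn_ord.
  by rewrite leqnn subnn expr0 ltnn mulr0 subr0.
by rewrite !mxE cycle_succE /= modnn leqnn subnn expr0 leq0n subn0 -exprS.
Qed.

Lemma qmx_TA : qmx n (cartan_of (aff_edges (TA N))) =
  (1%:M - 'X *: perm_mx cycle_succ) *m (1%:M - 'X *: (perm_mx cycle_succ)^T).
Proof.
rewrite mulmxBl !mulmxBr !mul1mx mulmx1 -scalemxAl -scalemxAr scalerA.
rewrite tr_perm_mx -perm_mxM mulgV perm_mx1.
apply/matrixP => i j; rewrite !mxE /qentry /cartan_of edge_weight_path add0n !ltn_ord /=.
have -> : (val j == (val i).+1 %% n)%N = (cycle_succ i == j).
  by rewrite -cycle_succE eq_sym val_eqE.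
have -> : (val i == (val j).+1 %% n)%N = (cycle_succ^-1%g i == j).
  by rewrite (canF_eq (permKV _)) -cycle_succE val_eqE.
rewrite val_eqE.
by case: (i == j); case: (cycle_succ i == j); case: (_ == j); rewrite /=; ring.
Qed.

Lemma qdet_TA : qdet n (cartan_of (aff_edges (TA N))) = (1 - 'X ^+ n) ^+ 2.
Proof.
have trE (A : 'M[{poly int}]_n) : 1%:M - 'X *: A^T = (1%:M - 'X *: A)^T.
  by apply/matrixP => i j; rewrite !mxE eq_sym.
by rewrite /qdet qmx_TA det_mulmx trE det_tr det_1_sub_cycle expr2.
Qed.

End CyclicType.

Theorem mainTheorem3 (X : ctype) : admissible X ->
  \det (qCaff X) * (1 - 'X ^+ 2) =
  (1 - 'X ^+ (pqr2 X).1.1) * (1 - 'X ^+ (pqr2 X).1.2) * (1 - 'X ^+ (pqr2 X).2)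
  :> {poly int}.
Proof.
rewrite qCaffE; case: X => [l|l||||l|l||] /= adm.
- by rewrite qdet_TA; ring.
- exact: qdet_TD.
- by qdet_reflect; ring.
- by qdet_reflect; ring.
- by qdet_reflect; ring.
- exact: qdet_TC.
- exact: qdet_TB.
- by qdet_reflect; ring.
- by qdet_reflect; ring.
Qed.
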